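(* Let $N\ge 5$ be odd, and let $G_{N,1}$ be the graph with vertex set $\mathbb Z_N=\{0,1,\dots,N-1\}$ in which two distinct vertices $i,j$ are adjacent if and only if $j-i\not\equiv\pm1\pmod N$. Put $\Delta=\sqrt{N(N-4)}$ and $\rho=\frac{N-2+\Delta}{2}$. For $u,v\in\mathbb Z_N$ let $q\in\{0,1,\dots,N-1\}$ with $q\equiv v-u\pmod N$. Then the effective resistance between $u$ and $v$ in $G_{N,1}$ (all edges of unit conductance) is \[ R^{(1)}(u,v)=\frac{2}{\Delta(\rho^N+1)}\left\{\rho^N-1+(-1)^q(\rho^q-\rho^{N-q})\right\}. \] Moreover, the right-hand side is invariant under $q\mapsto N-q$, so the resistance depends only on $h(u,v)=\min\{q,N-q\}$, and $R^{(1)}(u,v)>0$ whenever $u\ne v$.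
   Context: The effective resistance is that of the electrical network obtained by placing a unit resistor on each edge; equivalently $R(u,v)=(e_u-e_v)^T L^{+}(e_u-e_v)$ with $L^+$ the Moore–Penrose pseudoinverse of the Laplacian. *)

From HB Require Import structures.
From mathcomp Require Import all_boot all_order all_algebra.
Set Implicit Arguments. Unset Strict Implicit. Unset Printing Implicit Defensive.
Import Order.TTheory GRing.Theory Num.Theory.
Local Open Scope ring_scope.

Definition cdiff (N : nat) (i j : 'I_N) : nat := ((j + N - i) %% N)%N.

Definition adjG1 (N : nat) (i j : 'I_N) : bool :=
  [&& i != j, cdiff i j != 1%N & cdiff i j != (N - 1)%N].

Definition lapG1 (R : nzRingType) (N : nat) : 'M[R]_N :=
  \matrix_(i, j) (if i == j then (#|[pred k | adjG1 i k]|)%:R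
                  else - (adjG1 i j)%:R).

Definition is_MP_pinv (R : nzRingType) (n : nat) (A X : 'M[R]_n) : Prop :=
  [/\ A *m X *m A = A, X *m A *m X = X,
      (A *m X)^T = A *m X & (X *m A)^T = X *m A].

Definition quad_res (R : nzRingType) (n : nat) (X : 'M[R]_n) (u v : 'I_n) : R :=
  let e : 'cV[R]_n := delta_mx u 0 - delta_mx v 0 in
  (e^T *m X *m e) 0 0.

Definition Delta1 (R : rcfType) (N : nat) : R := Num.sqrt ((N * (N - 4))%N)%:R.
Definition rho1 (R : rcfType) (N : nat) : R := (N%:R - 2 + Delta1 R N) / 2.
Definition R1formula (R : rcfType) (N q : nat) : R :=
  2 / (Delta1 R N * (rho1 R N ^+ N + 1)) *
  (rho1 R N ^+ N - 1 + (-1) ^+ q * (rho1 R N ^+ q - rho1 R N ^+ (N - q))).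

(* Let L be the Laplacian of G_{N,1} and J the all-ones matrix.  Then L = K - J
   with K = (N-2) I + P + P^-1 for the cyclic shift P.  K is inverted by the
   circulant matrix of a Green function g of the recurrence
   g(q-1) + (N-2) g(q) + g(q+1) = [q = 0 mod N], built from the root s = -rho
   of s^2 + (N-2) s + 1.  As K and J commute and J^2 = N J, K^-1 - J/N^2 is the
   Moore-Penrose inverse of L.  The vector e_u - e_v is orthogonal to the
   all-ones vector, so it lies in the range of L, where all generalized inverses
   of L define the same quadratic form; hence R(u,v) = 2 (g(0) - g(q)), a
   positive multiple of -(1 - s^q)(1 - s^(N-q)).  For odd N exactly one of q and
   N - q is odd, so exactly one of the two factors is negative. *)

From mathcomp Require Import all_boot all_order all_algebra.
From mathcomp Require Import zify ring lra.
Set Implicit Arguments. Unset Strict Implicit. Unset Printing Implicit Defensive.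
Import Order.TTheory GRing.Theory Num.Theory.
Local Open Scope ring_scope.

Section CycleComplement.
Variable N : nat.
Hypothesis N_gt2 : (2 < N)%N.

Lemma cdiffE (i j : 'I_N) :
  cdiff i j = if (i <= j)%N then (j - i)%N else (j + N - i)%N.
Proof.
rewrite /cdiff; have := ltn_ord i; have := ltn_ord j; case: (leqP i j) => ij *.
  by rewrite -addnBAC // modnDr modn_small //; lia.
by rewrite modn_small //; lia.
Qed.

Lemma cdiffnn (i : 'I_N) : cdiff i i = 0%N.
Proof. by rewrite /cdiff addKn modnn. Qed.

Lemma cdiff_lt (i j : 'I_N) : (cdiff i j < N)%N.
Proof. by rewrite /cdiff ltn_mod; case: N i => [[]|]. Qed.

Lemma val_ordS (i : 'I_N) : val (ordS i) = if i.+1 == N then 0%N else i.+1.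
Proof.
rewrite /=; have := ltn_ord i; case: eqP => [->|]; first by rewrite modnn.
by move=> *; rewrite modn_small //; lia.
Qed.

Lemma val_ord_pred (i : 'I_N) :
  val (ord_pred i) = if i == 0%N :> nat then (N - 1)%N else (i - 1)%N.
Proof.
rewrite /=; have := ltn_ord i; case: eqP => [->|] *; first by rewrite modn_small //; lia.
by rewrite -subn1 addnC -addnBA ?lt0n; [rewrite modnDl modn_small //; lia | apply/eqP].
Qed.

Lemma cdiff_eq0 (i k : 'I_N) : (cdiff i k == 0%N) = (k == i).
Proof.
rewrite -val_eqE /= cdiffE; have := ltn_ord i; have := ltn_ord k.
by case: (leqP i k) => *; apply/eqP/eqP; lia.
Qed.

Lemma cdiff_eq1 (i k : 'I_N) : (cdiff i k == 1%N) = (k == ordS i).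
Proof.
rewrite -val_eqE val_ordS cdiffE /=; have := ltn_ord i; have := ltn_ord k.
by case: (leqP i k); case: (eqVneq i.+1 N) => *; apply/eqP/eqP; lia.
Qed.

Lemma cdiff_eqN1 (i k : 'I_N) : (cdiff i k == N - 1)%N = (k == ord_pred i).
Proof.
rewrite -val_eqE val_ord_pred cdiffE /=; have := ltn_ord i; have := ltn_ord k.
by case: (leqP i k); case: (eqVneq (i : nat) 0%N) => *; apply/eqP/eqP; lia.
Qed.

Lemma cdiff_ordS (i j : 'I_N) :
  cdiff (ordS i) j = if cdiff i j == 0%N then (N - 1)%N else (cdiff i j - 1)%N.
Proof.
rewrite !cdiffE val_ordS; have := ltn_ord i; have := ltn_ord j.
by case: (leqP i j); repeat case: ifP; move=> *; lia.
Qed.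

Lemma cdiff_ord_pred (i j : 'I_N) :
  cdiff (ord_pred i) j = if (cdiff i j).+1 == N then 0%N else (cdiff i j).+1.
Proof.
rewrite !cdiffE val_ord_pred; have := ltn_ord i; have := ltn_ord j.
by case: (leqP i j); repeat case: ifP; move=> *; lia.
Qed.

Lemma cdiffC (i j : 'I_N) : i != j -> cdiff j i = (N - cdiff i j)%N.
Proof.
rewrite -val_eqE !cdiffE /=; have := ltn_ord i; have := ltn_ord j.
by case: (leqP i j); case: (leqP j i) => *; apply/eqP; lia.
Qed.

Lemma adjG1E (i k : 'I_N) : adjG1 i k = (k \notin [set i; ordS i; ord_pred i]).
Proof. by rewrite /adjG1 cdiff_eq1 cdiff_eqN1 !inE (eq_sym i) !negb_or andbA. Qed.

Lemma ordS_neq (i : 'I_N) : ordS i != i.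
Proof. by rewrite -val_eqE val_ordS /=; case: (eqVneq i.+1 N) => *; apply/eqP; lia. Qed.

Lemma ord_pred_neq (i : 'I_N) : ord_pred i != i.
Proof.
by rewrite -val_eqE val_ord_pred /=; case: (eqVneq (i : nat) 0%N) => *; apply/eqP; lia.
Qed.

Lemma ordS_neq_pred (i : 'I_N) : ordS i != ord_pred i.
Proof.
rewrite -val_eqE val_ordS val_ord_pred /=; have := ltn_ord i.
by case: (eqVneq i.+1 N); case: (eqVneq (i : nat) 0%N) => *; apply/eqP; lia.
Qed.

Lemma card_adjG1 (i : 'I_N) : #|[pred k | adjG1 i k]| = (N - 3)%N.
Proof.
rewrite (eq_card (B := ~: [set i; ordS i; ord_pred i])); last first.
  by move=> k; rewrite in_setC -adjG1E.
have := cardsC [set i; ordS i; ord_pred i]; rewrite card_ord setUC cardsU1 cards2 !inE.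
rewrite (negbTE (ord_pred_neq i)) (eq_sym (ord_pred i)) (negbTE (ordS_neq_pred i)).
by rewrite (eq_sym i) ordS_neq; lia.
Qed.

End CycleComplement.

Lemma quad_resE (F : nzRingType) n (A : 'M[F]_n) (u v : 'I_n) :
  quad_res A u v = A u u + A v v - A u v - A v u.
Proof.
have entry (a b : 'I_n) :
    (delta_mx 0 a : 'rV[F]_n) *m A *m (delta_mx b 0 : 'cV[F]_n) = (A a b)%:M.
  by apply/matrixP => i j; rewrite !ord1 -rowE -colE !mxE eqxx mulr1n.
rewrite /quad_res linearB /= !trmx_delta mulmxBl !mulmxBr !mulmxBl.
rewrite (entry u u) (entry u v) (entry v u) (entry v v) !mxE !eqxx !mulr1n.
by rewrite opprB addrA [_ - A v u + _]addrAC (addrAC (A u u + A v v)).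
Qed.

Lemma quad_form_ginv (F : comNzRingType) n (L X : 'M[F]_n) (y : 'cV[F]_n) :
  L^T = L -> L *m X *m L = L -> (L *m y)^T *m X *m (L *m y) = y^T *m (L *m y).
Proof.
by move=> trL LXL; rewrite trmx_mul trL !mulmxA -(mulmxA _ L X) -(mulmxA _ _ L) LXL.
Qed.

Section PinvSubJ.
Variables (F : fieldType) (n : nat) (K G J : 'M[F]_n) (a : F).
Hypotheses (a_neq0 : a != 0) (trK : K^T = K) (trJ : J^T = J).
Hypotheses (KG : K *m G = 1%:M) (KJ : K *m J = a *: J) (JJ : J *m J = a *: J).

Let GK : G *m K = 1%:M := mulmx1C KG.

Let JK : J *m K = a *: J.
Proof. by rewrite -[LHS]trmxK trmx_mul trK trJ KJ linearZ /= trJ. Qed.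

Lemma mulmx_JG : J *m G = a^-1 *: J.
Proof.
have {1}-> : J = a^-1 *: (J *m K) by rewrite JK scalerA mulVf // scale1r.
by rewrite -scalemxAl -mulmxA KG mulmx1.
Qed.

Lemma mulmx_GJ : G *m J = a^-1 *: J.
Proof.
have {1}-> : J = a^-1 *: (K *m J) by rewrite KJ scalerA mulVf // scale1r.
by rewrite -scalemxAr mulmxA GK mul1mx.
Qed.

Lemma mulmx_subJ_inv : (K - J) *m G = 1%:M - a^-1 *: J.
Proof. by rewrite mulmxBl KG mulmx_JG. Qed.

Lemma is_MP_pinv_subJ : is_MP_pinv (K - J) (G - a ^- 2 *: J).
Proof.
set P := 1%:M - a^-1 *: J.
have JsubJ : J *m (K - J) = 0 by rewrite mulmxBr JK JJ subrr.
have subJJ : (K - J) *m J = 0 by rewrite mulmxBl KJ JJ subrr.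
have LX : (K - J) *m (G - a ^- 2 *: J) = P.
  by rewrite mulmxBr mulmx_subJ_inv -scalemxAr subJJ scaler0 subr0.
have XL : (G - a ^- 2 *: J) *m (K - J) = P.
  by rewrite mulmxBl -scalemxAl JsubJ scaler0 subr0 mulmxBr GK mulmx_GJ.
have trP : P^T = P by rewrite /P linearB /= trmx1 linearZ /= trJ.
split; rewrite ?LX ?XL ?trP //.
  by rewrite /P mulmxBl mul1mx -scalemxAl JsubJ scaler0 subr0.
rewrite /P mulmxBl mul1mx -scalemxAl mulmxBr -scalemxAr mulmx_JG JJ scalerA.
by rewrite (_ : a ^- 2 * a = a^-1) ?subrr ?scaler0 ?subr0 //; field.
Qed.

End PinvSubJ.

Section G1Matrices.
Variables (F : nzRingType) (N : nat).
Hypothesis N_gt2 : (2 < N)%N.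
Local Notation J := (const_mx 1 : 'M[F]_N).

Definition cyc_tridiag : 'M[F]_N :=
  (N%:R - 2)%:M + rowsub (@ordS N) 1%:M + rowsub (@ord_pred N) 1%:M.

Lemma lapG1_cyc_tridiag : lapG1 F N = cyc_tridiag - J.
Proof.
apply/matrixP => i k; rewrite !mxE adjG1E // !inE !(eq_sym k).
have [<-|_] := eqVneq i k.
  rewrite card_adjG1 // mulr1n (negbTE (ordS_neq N_gt2 i)) (negbTE (ord_pred_neq N_gt2 i)).
  by rewrite !addr0 natrB // -[3%N]/(2 + 1)%N natrD opprD addrA.
rewrite mulr0n add0r /=.
have [<-|_] := eqVneq (ordS i) k.
  by rewrite eq_sym (negbTE (ordS_neq_pred N_gt2 i)) addr0 /= oppr0 subrr.
by case: eqVneq => _; rewrite /= ?oppr0 ?add0r ?subrr // sub0r.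
Qed.

Lemma tr_cyc_tridiag : cyc_tridiag^T = cyc_tridiag.
Proof.
apply/matrixP => i k; rewrite !mxE.
have SP (x y : 'I_N) : (ordS x == y) = (ord_pred y == x).
  by apply/eqP/eqP => <-; rewrite ?ordSK ?ord_predK.
by rewrite (SP k i) -(SP i k) (eq_sym k) addrAC.
Qed.

Lemma tr_lapG1 : (lapG1 F N)^T = lapG1 F N.
Proof. by rewrite lapG1_cyc_tridiag linearB /= tr_cyc_tridiag trmx_const. Qed.

Lemma cyc_tridiag_const : cyc_tridiag *m J = N%:R *: J.
Proof.
rewrite !mulmxDl mul_scalar_mx !mul_rowsub_mx !mul1mx.
by apply/matrixP => i j; rewrite !mxE !mulr1 -addrA subrK.
Qed.

Lemma mul_const_mx1 : J *m J = N%:R *: J.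
Proof.
apply/matrixP => i j; rewrite !mxE; under eq_bigr do rewrite !mxE mulr1.
by rewrite sumr_const card_ord mulr1.
Qed.

Definition circulant (g : nat -> F) : 'M[F]_N := \matrix_(i, j) g (cdiff i j).

Variable g : nat -> F.
Hypothesis g_sym : forall q, (q <= N)%N -> g (N - q)%N = g q.

Lemma tr_circulant : (circulant g)^T = circulant g.
Proof.
apply/matrixP => i j; rewrite !mxE; have [->//|ij] := eqVneq i j.
by rewrite cdiffC // g_sym // ltnW // cdiff_lt.
Qed.

Lemma quad_res_circulant u v : quad_res (circulant g) u v = 2 * (g 0 - g (cdiff u v)).
Proof.
have := congr1 (fun A : 'M[F]_N => A u v) tr_circulant.
rewrite quad_resE !mxE !cdiffnn => ->.
by rewrite mulr_natl mulr2n addrACA addrA.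
Qed.

Hypothesis g_rec0 : (N%:R - 2) * g 0 + 2 * g 1 = 1.
Hypothesis g_rec : forall q, (0 < q < N)%N -> g q.-1 + (N%:R - 2) * g q + g q.+1 = 0.

Lemma cyc_tridiag_circulant : cyc_tridiag *m circulant g = 1%:M.
Proof.
rewrite !mulmxDl mul_scalar_mx !mul_rowsub_mx !mul1mx.
apply/matrixP => i j; rewrite !mxE cdiff_ordS // cdiff_ord_pred // (eq_sym i j) -cdiff_eq0 //.
move: (cdiff_lt i j); case: (cdiff i j) => [|q] q_lt /=.
  rewrite (_ : (1 == N) = false); last by apply/negbTE/eqP; lia.
  by rewrite g_sym ?(ltnW N_gt2) // -addrA -mulr2n -[g 1 *+ 2]mulr_natl g_rec0.
have -> : g (if q.+2 == N then 0%N else q.+2) = g q.+2.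
  by case: eqVneq => // ->; rewrite -{1}(subnn N) g_sym.
by rewrite subn1 /= (addrC ((N%:R - 2) * _)); apply: (g_rec (q := q.+1) q_lt).
Qed.

End G1Matrices.

Section G1Pinv.
Variables (F : fieldType) (N : nat) (g : nat -> F).
Hypotheses (N_gt2 : (2 < N)%N) (N_neq0 : N%:R != 0 :> F).
Hypothesis g_sym : forall q, (q <= N)%N -> g (N - q)%N = g q.
Hypothesis g_rec0 : (N%:R - 2) * g 0 + 2 * g 1 = 1.
Hypothesis g_rec : forall q, (0 < q < N)%N -> g q.-1 + (N%:R - 2) * g q + g q.+1 = 0.

Let KG := cyc_tridiag_circulant N_gt2 g_sym g_rec0 g_rec.

Lemma is_MP_pinv_lapG1 : is_MP_pinv (lapG1 F N) (circulant N g - N%:R ^- 2 *: const_mx 1).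
Proof.
rewrite lapG1_cyc_tridiag //; apply: is_MP_pinv_subJ => //.
- exact: tr_cyc_tridiag.
- exact: trmx_const.
- exact: cyc_tridiag_const.
- exact: mul_const_mx1.
Qed.

Lemma quad_res_lapG1 (X : 'M[F]_N) (u v : 'I_N) :
  lapG1 F N *m X *m lapG1 F N = lapG1 F N ->
  quad_res X u v = 2 * (g 0 - g (cdiff u v)).
Proof.
move=> LXL; set e : 'cV[F]_N := delta_mx u 0 - delta_mx v 0.
have Je : (const_mx 1 : 'M[F]_N) *m e = 0 by rewrite /e mulmxBr -!colE !col_const subrr.
have e_range : lapG1 F N *m (circulant N g *m e) = e.
  rewrite mulmxA lapG1_cyc_tridiag // (mulmx_subJ_inv N_neq0 _ _ KG) ?tr_cyc_tridiag //;
    rewrite ?trmx_const ?cyc_tridiag_const //.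
  by rewrite mulmxBl mul1mx -scalemxAl Je scaler0 subr0.
rewrite -quad_res_circulant // /quad_res -/e -{1 2}e_range quad_form_ginv ?tr_lapG1 //.
by rewrite e_range trmx_mul tr_circulant // mulmxA.
Qed.

End G1Pinv.

Section CyclicGreen.
Variables (F : fieldType) (N : nat) (b s : F).
Hypothesis s_root : s ^+ 2 + b * s + 1 = 0.

(* The solutions of g(q-1) + b g(q) + g(q+1) = 0 are spanned by s^q and s^-q;
   s^q + s^(N-q) is the one invariant under q |-> N - q, and the denominator
   normalises the equation at q = 0. *)
Definition cyc_green (q : nat) : F :=
  (s ^+ q + s ^+ (N - q)) / ((s^-1 - s) * (s ^+ N - 1)).

Lemma cyc_green_sym q : (q <= N)%N -> cyc_green (N - q) = cyc_green q.
Proof. by move=> qN; rewrite /cyc_green subKn // addrC. Qed.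

Lemma cyc_green_sub q : (q <= N)%N ->
  cyc_green 0 - cyc_green q =
  (1 - s ^+ q) * (1 - s ^+ (N - q)) / ((s^-1 - s) * (s ^+ N - 1)).
Proof.
move=> qN; rewrite /cyc_green -mulrBl subn0 expr0 -{1}(subnKC qN) exprD.
by congr (_ / _); ring.
Qed.

Lemma cyc_green_rec q : (0 < q < N)%N ->
  cyc_green q.-1 + b * cyc_green q + cyc_green q.+1 = 0.
Proof.
case: q => [//|p] /= pN; rewrite /cyc_green; set m := (N - p.+2)%N.
have [-> ->] : (N - p = m.+2)%N /\ (N - p.+1 = m.+1)%N by split; lia.
rewrite mulrA -!mulrDl; clearbody m.
have -> : s ^+ p + s ^+ m.+2 + b * (s ^+ p.+1 + s ^+ m.+1) + (s ^+ p.+2 + s ^+ m)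
    = (s ^+ p + s ^+ m) * (s ^+ 2 + b * s + 1) by rewrite !exprS; ring.
by rewrite s_root mulr0 mul0r.
Qed.

Lemma cyc_green_rec0 : (0 < N)%N -> (s^-1 - s) * (s ^+ N - 1) != 0 ->
  b * cyc_green 0 + 2 * cyc_green 1 = 1.
Proof.
move=> N_gt0 nondeg; rewrite /cyc_green !mulrA -mulrDl.
apply: (mulIf nondeg); rewrite divfK // mul1r subn0 subn1 expr0 expr1.
have s_neq0 : s != 0.
  apply/eqP => s0; move: s_root; rewrite s0 expr0n mulr0 !add0r.
  by apply/eqP; exact: oner_neq0.
have b_eq : b = - (s + s^-1).
  apply: (mulIf s_neq0); rewrite mulNr mulrDl mulVf // -expr2.
  by apply/eqP; rewrite -addr_eq0 addrCA addrA s_root.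
rewrite b_eq -(prednK N_gt0) exprS /=; move: (s ^+ N.-1) => x.
by field.
Qed.

End CyclicGreen.

Lemma mul_onesub_exprN_lt0 (R : realDomainType) (r : R) (m n : nat) :
  1 < r -> (0 < m)%N -> (0 < n)%N -> odd (m + n) ->
  (1 - (- r) ^+ m) * (1 - (- r) ^+ n) < 0.
Proof.
move=> r_gt1; wlog m_odd : m n / odd m.
  move=> gen m_gt0 n_gt0 mn_odd.
  have [m_odd|m_even] := boolP (odd m); first exact: gen m_odd m_gt0 n_gt0 mn_odd.
  rewrite mulrC; apply: gen => //; last by rewrite addnC.
  by move: mn_odd; rewrite oddD (negbTE m_even).
move=> m_gt0 n_gt0; rewrite oddD m_odd /= => n_even.
rewrite (exprNn r m) (exprNn r n) -(signr_odd _ m) -(signr_odd _ n) m_odd (negbTE n_even).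
rewrite expr1 expr0 mulN1r mul1r opprK.
have rm : 1 < r ^+ m by rewrite exprn_egt1 // -lt0n.
have rn : 1 < r ^+ n by rewrite exprn_egt1 // -lt0n.
nra.
Qed.

Section G1Green.
Variables (R : rcfType) (N : nat).
Hypotheses (N_odd : odd N) (N_ge5 : (5 <= N)%N).
Local Notation Δ := (Delta1 R N).
Local Notation ρ := (rho1 R N).

Lemma Delta1_gt0 : 0 < Δ.
Proof. by rewrite /Delta1 sqrtr_gt0 ltr0n muln_gt0; apply/andP; split; lia. Qed.

Lemma sqr_Delta1 : Δ ^+ 2 = (N%:R - 2) ^+ 2 - 4.
Proof. by rewrite /Delta1 sqr_sqrtr ?ler0n // natrM natrB; [ring | lia]. Qed.

Lemma rho1_gt1 : 1 < ρ.
Proof.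
have : 5 <= N%:R :> R by rewrite ler_nat.
have := Delta1_gt0; rewrite /rho1; lra.
Qed.

Lemma rho1_root : ρ ^+ 2 - (N%:R - 2) * ρ + 1 = 0.
Proof.
rewrite /rho1; transitivity ((Δ ^+ 2 - ((N%:R - 2) ^+ 2 - 4)) / 4); first by field.
by rewrite sqr_Delta1 subrr mul0r.
Qed.

Lemma rho1_subV : ρ - ρ^-1 = Δ.
Proof.
have -> : ρ^-1 = (N%:R - 2 - Δ) / 2.
  apply: mulr1_eq; rewrite /rho1.
  transitivity (1 + ((N%:R - 2) ^+ 2 - 4 - Δ ^+ 2) / 4); first by field.
  by rewrite sqr_Delta1 subrr mul0r addr0.
by rewrite /rho1; field.
Qed.

Definition greenG1 : nat -> R := cyc_green N (- rho1 R N).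

Let s_root : (- ρ) ^+ 2 + (N%:R - 2) * (- ρ) + 1 = 0.
Proof. by rewrite sqrrN mulrN rho1_root. Qed.

Let s_subV : (- ρ)^-1 - (- ρ) = Δ.
Proof. by rewrite invrN opprK addrC rho1_subV. Qed.

Let s_expN : (- ρ) ^+ N = - ρ ^+ N.
Proof. by rewrite exprNn -signr_odd N_odd mulN1r. Qed.

Let rhoN_gt0 : 0 < ρ ^+ N.
Proof. by rewrite exprn_gt0 // (lt_trans ltr01 rho1_gt1). Qed.

Lemma greenG1_sym q : (q <= N)%N -> greenG1 (N - q) = greenG1 q.
Proof. exact: cyc_green_sym. Qed.

Lemma greenG1_rec q : (0 < q < N)%N ->
  greenG1 q.-1 + (N%:R - 2) * greenG1 q + greenG1 q.+1 = 0.
Proof. exact: (cyc_green_rec (N := N) s_root). Qed.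

Lemma greenG1_rec0 : (N%:R - 2) * greenG1 0 + 2 * greenG1 1 = 1.
Proof.
apply: cyc_green_rec0 s_root _ _; first lia.
rewrite s_subV s_expN mulf_neq0 ?(lt0r_neq0 Delta1_gt0) //.
by apply: ltr0_neq0; rewrite -opprD oppr_lt0 addr_gt0 ?ltr01.
Qed.

Lemma R1formula_greenG1 q : (q <= N)%N -> R1formula R N q = 2 * (greenG1 0 - greenG1 q).
Proof.
move=> qN; rewrite /greenG1 cyc_green_sub // s_subV s_expN /R1formula.
rewrite (exprNn ρ q) (exprNn ρ (N - q)).
have -> : (-1) ^+ (N - q) = - (-1) ^+ q :> R.
  by rewrite -(signr_odd _ (N - q)) -(signr_odd _ q) oddB // N_odd; case: odd; rewrite ?opprK.
have -> : ρ ^+ N = ρ ^+ q * ρ ^+ (N - q) by rewrite -exprD subnKC.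
have := Delta1_gt0; have : 0 < ρ ^+ q * ρ ^+ (N - q).
  by rewrite mulr_gt0 // exprn_gt0 // (lt_trans ltr01 rho1_gt1).
rewrite -signr_odd; move: (ρ ^+ q) (ρ ^+ (N - q)) => a c ac_gt0 Δ_gt0.
have ac1 : a * c + 1 != 0 by rewrite lt0r_neq0 // addr_gt0.
have Δ0 : Δ != 0 := lt0r_neq0 Δ_gt0.
by case: odd; rewrite ?expr0 ?expr1; field; rewrite -opprD oppr_eq0 ac1 Δ0.
Qed.

Lemma R1formula_sym q : (q <= N)%N -> R1formula R N q = R1formula R N (N - q).
Proof. by move=> qN; rewrite !R1formula_greenG1 ?leq_subr // greenG1_sym. Qed.

Lemma R1formula_gt0 q : (0 < q < N)%N -> 0 < R1formula R N q.
Proof.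
case/andP=> q_gt0 qN; have qN' := ltnW qN.
rewrite R1formula_greenG1 // /greenG1 cyc_green_sub // s_subV s_expN.
have num_lt0 : (1 - (- ρ) ^+ q) * (1 - (- ρ) ^+ (N - q)) < 0.
  by apply: mul_onesub_exprN_lt0; rewrite ?rho1_gt1 ?subn_gt0 ?subnKC.
have den_lt0 : Δ * (- ρ ^+ N - 1) < 0.
  by rewrite pmulr_rlt0 ?Delta1_gt0 // -opprD oppr_lt0 addr_gt0 ?ltr01.
by rewrite mulr_gt0 // nmulr_rgt0 // invr_lt0.
Qed.

End G1Green.

Theorem theorem4p1 (R : rcfType) (N : nat) (hodd : odd N) (h5 : (5 <= N)%N) :
  (exists X : 'M[R]_N, is_MP_pinv (lapG1 R N) X) /\
  (forall X : 'M[R]_N, is_MP_pinv (lapG1 R N) X ->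
     forall u v : 'I_N,
       quad_res X u v = R1formula R N (cdiff u v) /\
       quad_res X u v = R1formula R N (minn (cdiff u v) (N - cdiff u v)) /\
       (u != v -> 0 < quad_res X u v)) /\
  (forall q : nat, (q <= N)%N -> R1formula R N q = R1formula R N (N - q)).
Proof.
have N_gt2 : (2 < N)%N by lia.
have N_neq0 : N%:R != 0 :> R by rewrite pnatr_eq0; lia.
have g_sym := @greenG1_sym R N.
have g_rec0 := greenG1_rec0 R hodd h5.
have g_rec := greenG1_rec R hodd h5.
split; first by eexists; exact: is_MP_pinv_lapG1 N_gt2 N_neq0 g_sym g_rec0 g_rec.
split; last exact: R1formula_sym.
move=> X [LXL _ _ _] u v; have uv_lt := cdiff_lt u v.
have quadX : quad_res X u v = R1formula R N (cdiff u v).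
  rewrite (quad_res_lapG1 N_gt2 N_neq0 g_sym g_rec0 g_rec _ _ LXL).
  by rewrite R1formula_greenG1 // ltnW.
split=> //; split.
  by rewrite quadX /minn; case: ltnP => // _; rewrite R1formula_sym // ltnW.
by move=> uv; rewrite quadX (R1formula_gt0 _ hodd h5) // uv_lt andbT lt0n cdiff_eq0 // eq_sym.
Qed.
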